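(* Let $(A,\circ,[\cdot,\cdot])$ be a finite-dimensional dual pre-Poisson algebra. If there is a nondegenerate skew-symmetric invariant bilinear form $\mathcal{B}$ on $A$, then the representations $(A;L_\circ,R_\circ,L_{[\cdot,\cdot]},R_{[\cdot,\cdot]})$ and $(A^*;-L_\circ^*,-L_\circ^*+R_\circ^*,L_{[\cdot,\cdot]}^*,-L_{[\cdot,\cdot]}^*-R_{[\cdot,\cdot]}^* )$ of $(A,\circ,[\cdot,\cdot])$ are equivalent. Conversely, if these two representations are equivalent, then there exists a nondegenerate invariant bilinear form $\mathcal{B}$ on $A$.
   Context: Field $\mathbb{F}$ of characteristic $0$. A dual pre-Poisson algebra: $x\circ(y\circ z)=(x\circ y)\circ z=(y\circ x)\circ z$; $[x,[y,z]]=[[x,y],z]+[y,[x,z]]$; $[x,y\circ z]=[x,y]\circ z+y\circ[x,z]$; $[x\circ y,z]=x\circ[y,z]+y\circ[x,z]$; $[x,y]\circ z=-[y,x]\circ z$. $L_\diamond(x)y=x\diamond y$, $R_\diamond(x)y=y\diamond x$; for $f:A\to\mathrm{End}(A)$, $f^*:A\to\mathrm{End}(A^* )$ is $\langle f^*(x)a^*,y\rangle=-\langle a^*,f(x)y\rangle$. A bilinear form $\mathcal{B}$ on $A$ is invariant if $\mathcal{B}(x\circ y,z)=\mathcal{B}(x,y\circ z-z\circ y)$ and $\mathcal{B}([x,y],z)=\mathcal{B}(x,[y,z]+[z,y])$ for all $x,y,z$. Two representations $(V_1;l_1,r_1,l'_1,r'_1)$ and $(V_2;l_2,r_2,l'_2,r'_2)$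 (quadruples of linear maps $A\to\mathrm{End}(V_i)$ playing the roles of left/right actions of $\circ$ and of $[\cdot,\cdot]$) are equivalent if there is a linear isomorphism $\varphi:V_1\to V_2$ with $\varphi l_1(x)=l_2(x)\varphi$, $\varphi r_1(x)=r_2(x)\varphi$, $\varphi l'_1(x)=l'_2(x)\varphi$, $\varphi r'_1(x)=r'_2(x)\varphi$ for all $x\in A$. *)

From HB Require Import structures.
From mathcomp Require Import all_boot all_order all_algebra.
Set Implicit Arguments. Unset Strict Implicit. Unset Printing Implicit Defensive.
Import GRing.Theory.
Local Open Scope ring_scope.

Definition bilinear_op (F : fieldType) (A : vectType F) (op : A -> A -> A) :=
  (forall x, linear (op x)) /\ (forall y, linear (fun x => op x y)).

Definition dual_pre_poisson (F : fieldType) (A : vectType F)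
  (circ br : A -> A -> A) : Prop :=
  bilinear_op circ /\ bilinear_op br /\
  (forall x y z, circ x (circ y z) = circ (circ x y) z) /\
  (forall x y z, circ (circ x y) z = circ (circ y x) z) /\
  (forall x y z, br x (br y z) = br (br x y) z + br y (br x z)) /\
  (forall x y z, br x (circ y z) = circ (br x y) z + circ y (br x z)) /\
  (forall x y z, br (circ x y) z = circ x (br y z) + circ y (br x z)) /\
  (forall x y z, circ (br x y) z = - circ (br y x) z).

(* The dual space A^* is modelled as 'Hom(A, F^o), with pairing <a*, y> := a* y. *)

Definition Lop (F : fieldType) (A : vectType F) (op : A -> A -> A) (x : A) : A -> A :=
  fun y => op x y.
Definition Rop (F : fieldType) (A : vectType F) (op : A -> A -> A) (x : A) : A -> A :=
  fun y => op y x.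

Definition dualrep (F : fieldType) (A : vectType F) (f : A -> A -> A)
  (x : A) (a : 'Hom(A, F^o)) : 'Hom(A, F^o) :=
  linfun (fun y : A => - a (f x y) : F^o).

Definition rep_equiv (F : fieldType) (A V1 V2 : vectType F)
  (l1 r1 l1' r1' : A -> V1 -> V1) (l2 r2 l2' r2' : A -> V2 -> V2) : Prop :=
  exists phi : V1 -> V2,
    linear phi /\ bijective phi /\
    (forall x v, phi (l1 x v) = l2 x (phi v)) /\
    (forall x v, phi (r1 x v) = r2 x (phi v)) /\
    (forall x v, phi (l1' x v) = l2' x (phi v)) /\
    (forall x v, phi (r1' x v) = r2' x (phi v)).

Definition bilin_form (F : fieldType) (A : vectType F) (B : A -> A -> F) :=
  (forall x, linear (B x : A -> F^o)) /\ (forall y, linear ((fun x => B x y) : A -> F^o)).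

Definition nondeg_form (F : fieldType) (A : vectType F) (B : A -> A -> F) :=
  forall x, (forall y, B x y = 0) -> x = 0.

Definition skew_form (F : fieldType) (A : vectType F) (B : A -> A -> F) :=
  forall x y, B x y = - B y x.

Definition dpp_invariant_form (F : fieldType) (A : vectType F)
  (circ br : A -> A -> A) (B : A -> A -> F) :=
  (forall x y z, B (circ x y) z = B x (circ y z - circ z y)) /\
  (forall x y z, B (br x y) z = B x (br y z + br z y)).

Definition adjoint_rep_equiv (F : fieldType) (A : vectType F) (circ br : A -> A -> A) :=
  rep_equiv (V1 := A) (V2 := 'Hom(A, F^o))
    (Lop circ) (Rop circ) (Lop br) (Rop br)
    (fun x a => - dualrep (Lop circ) x a)
    (fun x a => - dualrep (Lop circ) x a + dualrep (Rop circ) x a)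
    (fun x a => dualrep (Lop br) x a)
    (fun x a => - dualrep (Lop br) x a - dualrep (Rop br) x a).

From HB Require Import structures.
From mathcomp Require Import all_boot all_order all_algebra.
Import GRing.Theory.
Local Open Scope ring_scope.

Set Implicit Arguments.
Unset Strict Implicit.

(* A nondegenerate form B identifies A with A^* through v |-> B(v, -).  Under
   this identification, invariance of B says exactly that the right actions
   R_circ and R_br become -L_circ^* + R_circ^* and -L_br^* - R_br^*; together
   with skew-symmetry it also turns L_circ and L_br into -L_circ^* and L_br^*.
   Conversely, an equivalence phi : A -> A^* yields the form <phi x, y>, which
   is invariant because phi intertwines the right actions. *)

Section LinearFunctions.
Variables (R : fieldType) (aT rT : vectType R) (f : aT -> rT).
Hypothesis f_linear : linear f.

Let fL : {linear aT -> rT} := HB.pack f (GRing.isLinear.Build _ _ _ _ f f_linear).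

Lemma linfunE_linear : linfun f =1 f.
Proof. exact: (lfunE fL). Qed.

Lemma lin_funB u v : f (u - v) = f u - f v.
Proof. exact: (raddfB fL). Qed.

Lemma lin_funD u v : f (u + v) = f u + f v.
Proof. exact: (raddfD fL). Qed.

Lemma lin_funN u : f (- u) = - f u.
Proof. exact: (raddfN fL). Qed.

Lemma lin_inj_bijective :
  \dim {:aT} = \dim {:rT} -> injective f -> bijective f.
Proof.
move=> dim_eq f_inj; pose Phi := linfun f.
have ker0 : lker Phi == 0%VS.
  by apply/lker0P => u v; rewrite !linfunE_linear; apply: f_inj.
have img_full : limg Phi = fullv.
  apply/eqP; rewrite eqEdim subvf /= limg_dim_eq ?dim_eq //.
  by rewrite (eqP ker0) capv0.
exists (Phi^-1)%VF => [v | w]; first by rewrite -linfunE_linear lker0_lfunK.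
by rewrite -linfunE_linear limg_lfunVK // img_full memvf.
Qed.

End LinearFunctions.

Lemma dim_dual (F : fieldType) (A : vectType F) :
  \dim {:'Hom(A, F^o)} = \dim {:A}.
Proof. by rewrite !dimvf /dim /= muln1. Qed.

Lemma dualrepE (F : fieldType) (A : vectType F) (f : A -> A -> A) x :
  linear (f x) -> forall a y, dualrep f x a y = - a (f x y).
Proof.
move=> f_linear a y; rewrite /dualrep linfunE_linear // => k u v /=.
by rewrite f_linear linearP /= opprD scalerN.
Qed.

Section FormsAndDualMaps.
Variables (F : fieldType) (A : vectType F) (circ br : A -> A -> A).
Hypotheses (circ_bilin : bilinear_op circ) (br_bilin : bilinear_op br).

Lemma coadjoint_circE x (a : 'Hom(A, F^o)) y :
  (- dualrep (Lop circ) x a + dualrep (Rop circ) x a) y = a (circ x y - circ y x).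
Proof.
case: circ_bilin => circ_l circ_r.
rewrite add_lfunE opp_lfunE (dualrepE (circ_l x)) (dualrepE (circ_r x)) opprK.
by rewrite (lin_funB (linearP a)).
Qed.

Lemma coadjoint_brE x (a : 'Hom(A, F^o)) y :
  (- dualrep (Lop br) x a - dualrep (Rop br) x a) y = a (br x y + br y x).
Proof.
case: br_bilin => br_l br_r.
rewrite add_lfunE !opp_lfunE (dualrepE (br_l x)) (dualrepE (br_r x)) !opprK.
by rewrite (lin_funD (linearP a)).
Qed.

Lemma invariant_form_right_intertwining (phi : A -> 'Hom(A, F^o)) :
  dpp_invariant_form circ br (fun x y => phi x y) <->
  (forall x v, phi (Rop circ x v) = - dualrep (Lop circ) x (phi v) + dualrep (Rop circ) x (phi v)) /\
  (forall x v, phi (Rop br x v) = - dualrep (Lop br) x (phi v) - dualrep (Rop br) x (phi v)).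
Proof.
split=> [[inv_circ inv_br] | [phi_circ phi_br]].
- split=> x v; apply/lfunP => y.
  + by rewrite coadjoint_circE; apply: inv_circ.
  + by rewrite coadjoint_brE; apply: inv_br.
- split=> x y z.
  + by rewrite -coadjoint_circE -[circ x y]/(Rop circ y x) phi_circ.
  + by rewrite -coadjoint_brE -[br x y]/(Rop br y x) phi_br.
Qed.

Variable B : A -> A -> F.
Hypotheses (B_bilin : bilin_form B) (B_skew : skew_form B)
           (B_inv : dpp_invariant_form circ br B).

Lemma skew_invariant_circ_swap x v y : B (circ x v) y = B v (circ x y).
Proof.
case: B_bilin B_inv => [B_l _] [inv_circ _].
by rewrite inv_circ (B_skew v) inv_circ -(lin_funN (B_l x)) opprB.
Qed.

Lemma skew_invariant_br_swap x v y : B (br x v) y = - B v (br x y).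
Proof. by case: B_inv => _ inv_br; rewrite (B_skew v) opprK !inv_br addrC. Qed.

Definition form_dual (v : A) : 'Hom(A, F^o) := linfun (B v : A -> F^o).

Lemma form_dualE v y : form_dual v y = B v y.
Proof. by case: B_bilin => B_l _; rewrite /form_dual linfunE_linear. Qed.

Lemma form_dual_linear : linear form_dual.
Proof.
case: B_bilin => _ B_r k u v; apply/lfunP => y.
by rewrite add_lfunE scale_lfunE !form_dualE B_r.
Qed.

Lemma form_dual_inj : nondeg_form B -> injective form_dual.
Proof.
case: B_bilin => _ B_r B_nd u v e; apply/eqP; rewrite -subr_eq0; apply/eqP.
by apply: B_nd => y; rewrite (lin_funB (B_r y)) -!form_dualE e subrr.
Qed.

Lemma form_dual_invariant :
  dpp_invariant_form circ br (fun x y => form_dual x y).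
Proof. by case: B_inv => inv_circ inv_br; split=> x y z; rewrite !form_dualE. Qed.

Lemma form_dual_left_circ x v :
  form_dual (Lop circ x v) = - dualrep (Lop circ) x (form_dual v).
Proof.
case: circ_bilin => circ_l _; apply/lfunP => y.
by rewrite opp_lfunE (dualrepE (circ_l x)) opprK !form_dualE skew_invariant_circ_swap.
Qed.

Lemma form_dual_left_br x v :
  form_dual (Lop br x v) = dualrep (Lop br) x (form_dual v).
Proof.
case: br_bilin => br_l _; apply/lfunP => y.
by rewrite (dualrepE (br_l x)) !form_dualE skew_invariant_br_swap.
Qed.

End FormsAndDualMaps.

Lemma form_of_dual_bilin (F : fieldType) (A : vectType F)
    (phi : A -> 'Hom(A, F^o)) :
  linear phi -> bilin_form (fun x y => phi x y).
Proof.
move=> phi_linear; split=> [x | y] k u v /=; first by rewrite linearP.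
by rewrite phi_linear add_lfunE scale_lfunE.
Qed.

Lemma form_of_dual_nondeg (F : fieldType) (A : vectType F)
    (phi : A -> 'Hom(A, F^o)) :
  linear phi -> injective phi -> nondeg_form (fun x y => phi x y).
Proof.
move=> phi_linear phi_inj x x_null; apply: phi_inj.
have phi0 : phi 0 = 0 by have := lin_funB phi_linear 0 0; rewrite !subrr.
by apply/lfunP => y; rewrite phi0 zero_lfunE x_null.
Qed.

Theorem proposition2p40 (F : fieldType) (A : vectType F) (circ br : A -> A -> A) :
  [pchar F] =i pred0 ->
  dual_pre_poisson circ br ->
  ((exists B : A -> A -> F,
       [/\ bilin_form B, nondeg_form B, skew_form B & dpp_invariant_form circ br B]) ->
     adjoint_rep_equiv circ br) /\
  (adjoint_rep_equiv circ br ->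
     exists B : A -> A -> F,
       [/\ bilin_form B, nondeg_form B & dpp_invariant_form circ br B]).
Proof.
move=> _ [circ_bilin [br_bilin _]]; split.
- move=> [B [B_bilin B_nd B_skew B_inv]].
  have phi_linear := form_dual_linear B_bilin.
  have phi_bij : bijective (form_dual B).
    exact: lin_inj_bijective phi_linear (esym (dim_dual A)) (form_dual_inj B_bilin B_nd).
  have [phi_circ phi_br] := (invariant_form_right_intertwining circ_bilin br_bilin
    (form_dual B)).1 (form_dual_invariant B_bilin B_inv).
  have phi_lcirc := form_dual_left_circ circ_bilin B_bilin B_skew B_inv.
  have phi_lbr := form_dual_left_br br_bilin B_bilin B_skew B_inv.
  by exists (form_dual B).
- move=> [phi [phi_linear [phi_bij [_ [phi_circ [_ phi_br]]]]]].
  exists (fun x y => phi x y); split.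
  + exact: form_of_dual_bilin.
  + exact: form_of_dual_nondeg phi_linear (bij_inj phi_bij).
  + by apply/(invariant_form_right_intertwining circ_bilin br_bilin phi); split.
Qed.
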